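(* Let $\mathcal M\subseteq\bigcup_{K\ge1}\mathcal F_K\times\mathcal Q_K$ satisfy: (1) $K(F)<N$ for all $(F,Q)\in\mathcal M$; (2) for every $(F,Q)\in\mathcal M$, $\{F\}\times\mathcal Q_{K(F)}^{\mathrm{an}}\subseteq\mathcal M$. Then $\mathcal M$ is identifiable if and only if (a) for all $(F^1,Q^1),(F^2,Q^2)\in\mathcal M$, $F^1Q^1=F^2Q^2$ implies $\mathrm{co}(F^1)=\mathrm{co}(F^2)$, and (b) for every $(F,Q)\in\mathcal M$, with $K=K(F)$, the vectors $F_{\star 1}-F_{\star K},\dots,F_{\star K-1}-F_{\star K}$ are linearly independent.
   Context: Fix positive integers $M$ and $N$. For a positive integer $K$, $\mathcal F_K$ is the set of real $M\times K$ matrices with all entries in $[0,1]$, and $\mathcal Q_K$ is the set of real $K\times N$ matrices with entries in $[0,1]$ each of whose columns sums to $1$. $K(F)$ is the number of columns of $F$, $A_{\star j}$ the $j$-th column of $A$, $e_k$ the $k$-th standard basis vector. $\mathcal Q_K^{\mathrm{an}}$ is the set of $Q\in\mathcal Q_K$ such that for every $k$ there is $i$ with $Q_{\star i}=e_k$. For a matrix $A$, $\mathrm{co}(A)$ is the convex hull of the columns of $A$. $(F^1,Q^1)\sim(F^2,Q^2)$ means $F^1,F^2$ have the same number $K$ of columns and there is a permutation $\pi$ of $\{1,\dots,K\}$ with $F^2_{sk}=F^1_{s\pi(k)}$ and $Q^2_{ki}=Q^1_{\pi(k)i}$ for all $s,k,i$. $\mathcal M$ is identifiable if for all $(F^1,Q^1),(F^2,Q^2)\in\mathcal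 M$, $F^1Q^1=F^2Q^2$ implies $(F^1,Q^1)\sim(F^2,Q^2)$. *)

From HB Require Import structures.
From mathcomp Require Import all_boot all_order all_algebra.
From mathcomp Require Import reals.
Set Implicit Arguments. Unset Strict Implicit. Unset Printing Implicit Defensive.
Import Order.TTheory GRing.Theory Num.Theory.
Local Open Scope ring_scope.

Section Defs.
Variable R : realType.

Definition inFK (m K : nat) (F : 'M[R]_(m, K)) : Prop :=
  forall s k, 0 <= F s k <= 1.

Definition inQK (K n : nat) (Q : 'M[R]_(K, n)) : Prop :=
  (forall k i, 0 <= Q k i <= 1) /\ (forall i, \sum_(k < K) Q k i = 1).

Definition inQan (K n : nat) (Q : 'M[R]_(K, n)) : Prop :=
  inQK Q /\ forall k : 'I_K, exists i : 'I_n, col i Q = delta_mx k 0.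

Definition model_equiv (m n K1 K2 : nat)
  (F1 : 'M[R]_(m, K1)) (Q1 : 'M[R]_(K1, n))
  (F2 : 'M[R]_(m, K2)) (Q2 : 'M[R]_(K2, n)) : Prop :=
  K1 = K2 /\
  exists pi : 'I_K2 -> 'I_K1, bijective pi /\
    (forall s k, F2 s k = F1 s (pi k)) /\ (forall k i, Q2 k i = Q1 (pi k) i).

Definition identifiable (m n : nat)
  (mdl : forall K : nat, 'M[R]_(m, K) -> 'M[R]_(K, n) -> Prop) : Prop :=
  forall K1 (F1 : 'M[R]_(m, K1)) Q1 K2 (F2 : 'M[R]_(m, K2)) Q2,
    mdl K1 F1 Q1 -> mdl K2 F2 Q2 -> F1 *m Q1 = F2 *m Q2 ->
    model_equiv F1 Q1 F2 Q2.

Definition in_co (m K : nat) (A : 'M[R]_(m, K)) (x : 'cV[R]_m) : Prop :=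
  exists lam : 'I_K -> R, (forall k, 0 <= lam k) /\ \sum_(k < K) lam k = 1 /\
    x = \sum_(k < K) lam k *: col k A.

Definition lin_indep (m p : nat) (v : 'I_p -> 'cV[R]_m) : Prop :=
  forall c : 'I_p -> R, \sum_(i < p) c i *: v i = 0 -> forall i, c i = 0.

Definition diffs_indep (m K : nat) (F : 'M[R]_(m, K)) : Prop :=
  forall klast : 'I_K, (klast.+1 = K)%N ->
    lin_indep (fun i : 'I_K.-1 => col (widen_ord (leq_pred K) i) F - col klast F).

End Defs.

From HB Require Import structures.
From mathcomp Require Import all_boot all_order all_algebra.
From mathcomp Require Import reals.
Import Order.TTheory GRing.Theory Num.Theory.
Local Open Scope ring_scope.
Set Implicit Arguments.
Unset Strict Implicit.
Unset Printing Implicit Defensive.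

(* Affine independence of the columns of F (equivalently, linear independence
   of the differences F_k - F_K) is necessary for identifiability: if d is an
   affine dependence (sum d = 0 and F d = 0), the anchored mixing matrices
   [e_1 ... e_K u ... u] and [e_1 ... e_K u+td ... u+td], with u uniform and t
   small, give the same product with F, so their rows agree up to a
   permutation, which forces td = 0.  Conversely, if co(F1) = co(F2) and both
   column families are affinely independent, then they are the vertex sets of
   the same simplex, hence agree up to a permutation, and Q is recovered from
   FQ as barycentric coordinates. *)

Lemma sumr_delta (R : pzRingType) K (k : 'I_K) : \sum_j ((j == k)%:R : R) = 1.
Proof. by rewrite (bigD1 k) //= eqxx big1 ?addr0 // => j /negbTE ->. Qed.

Lemma sum_scale_delta (R : pzRingType) (V : lmodType R) K (v : 'I_K -> V) k :
  \sum_j (j == k)%:R *: v j = v k.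
Proof.
by rewrite (bigD1 k) //= eqxx scale1r big1 ?addr0 // => j /negbTE ->; rewrite scale0r.
Qed.

Lemma col_mulmx (R : comPzRingType) p K n (A : 'M[R]_(p, K)) (B : 'M[R]_(K, n)) i :
  col i (A *m B) = \sum_k B k i *: col k A.
Proof.
by apply/colP => s; rewrite !mxE summxE; apply: eq_bigr => k _; rewrite !mxE mulrC.
Qed.

Lemma sum_uniform (R : numFieldType) K : (0 < K)%N -> \sum_(k < K) K%:R^-1 = 1 :> R.
Proof.
by move=> K_gt0; rewrite sumr_const card_ord -[_ *+ K]mulr_natl mulfV // pnatr_eq0 -lt0n.
Qed.

Section Simplex.
Variables (R : realType) (m : nat).
Implicit Types (K n : nat).

Definition affine_indep K (A : 'M[R]_(m, K)) : Prop :=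
  forall d : 'I_K -> R, \sum_k d k = 0 -> \sum_k d k *: col k A = 0 ->
    forall k, d k = 0.

Lemma affine_coord_inj K (A : 'M[R]_(m, K)) (mu nu : 'I_K -> R) :
  affine_indep A -> \sum_k mu k = \sum_k nu k ->
  \sum_k mu k *: col k A = \sum_k nu k *: col k A -> mu =1 nu.
Proof.
move=> indepA eq_sum eq_comb k; apply/eqP; rewrite -subr_eq0; apply/eqP.
apply: (indepA (fun k => mu k - nu k)); first by rewrite sumrB eq_sum subrr.
by under eq_bigr do rewrite scalerBl; rewrite sumrB eq_comb subrr.
Qed.

Lemma affine_indep_col_inj K (A : 'M[R]_(m, K)) :
  affine_indep A -> injective (fun k => col k A).
Proof.
move=> indepA k l eq_col.
have := affine_coord_inj (mu := fun j => (j == k)%:R) (nu := fun j => (j == l)%:R) indepA.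
rewrite !sumr_delta !sum_scale_delta => /(_ erefl eq_col k).
by rewrite eqxx; case: eqP => // _ /eqP; rewrite oner_eq0.
Qed.

Lemma affine_comb_ord_max K (A : 'M[R]_(m, K.+1)) (d : 'I_K.+1 -> R) :
  \sum_k d k = 0 ->
  \sum_k d k *: col k A =
  \sum_(i < K) d (widen_ord (leqnSn K) i) *:
                 (col (widen_ord (leqnSn K) i) A - col ord_max A).
Proof.
rewrite big_ord_recr /= => /eqP; rewrite addrC addr_eq0 => /eqP d_max.
rewrite big_ord_recr /= d_max scaleNr scaler_suml -sumrB.
by apply: eq_bigr => i _; rewrite scalerBr.
Qed.

Lemma diffs_indep_affine K (F : 'M[R]_(m, K)) :
  (0 < K)%N -> diffs_indep F <-> affine_indep F.
Proof.
case: K F => // K F _.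
rewrite /diffs_indep; have -> : leq_pred K.+1 = leqnSn K by apply: bool_irrelevance.
split=> [/(_ ord_max erefl) indep d d_sum0 d_comb0 k | indep klast klastE].
  have d_widen0 i : d (widen_ord (leqnSn K) i) = 0.
    apply: (indep (fun i => d (widen_ord (leqnSn K) i))).
    by rewrite -affine_comb_ord_max.
  have d_max0 : d ord_max = 0.
    by move: d_sum0; rewrite big_ord_recr /= big1 ?add0r.
  have [k_lt_K | k_ge_K] := ltnP k K.
    by have -> : k = widen_ord (leqnSn K) (Ordinal k_lt_K) by apply: val_inj.
  by have -> : k = ord_max by apply/val_inj/eqP; rewrite eqn_leq -ltnS ltn_ord.
have -> : klast = ord_max by apply/val_inj/succn_inj.
move=> c c_comb0 i.
pose d (k : 'I_K.+1) := oapp c (- \sum_i c i) (insub (val k)).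
have d_widen j : d (widen_ord (leqnSn K) j) = c j by rewrite /d /= valK.
have d_max : d ord_max = - \sum_i c i by rewrite /d insubN ?ltnn.
have d_sum0 : \sum_k d k = 0.
  by rewrite big_ord_recr /= d_max; under eq_bigr do rewrite d_widen; rewrite subrr.
rewrite -d_widen; apply: (indep d d_sum0).
by rewrite affine_comb_ord_max //; under eq_bigr do rewrite d_widen.
Qed.

Lemma in_co_col K (A : 'M[R]_(m, K)) k : in_co A (col k A).
Proof.
exists (fun j => (j == k)%:R); split; first by move=> j; rewrite ler0n.
by split; [exact: sumr_delta | rewrite sum_scale_delta].
Qed.

Lemma in_co_relabel K (A B : 'M[R]_(m, K)) (f : 'I_K -> 'I_K) x :
  injective f -> (forall s k, B s k = A s (f k)) -> in_co A x -> in_co B x.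
Proof.
move=> f_inj eqBA [lam [lam_ge0 [lam_sum1 ->]]].
exists (lam \o f); split=> [k|]; first exact: lam_ge0.
split; first by rewrite -lam_sum1 [RHS](reindex_inj f_inj).
rewrite [LHS](reindex_inj f_inj); apply: eq_bigr => k _ /=.
by congr (_ *: _); apply/colP => s; rewrite !mxE eqBA.
Qed.

Lemma model_equiv_in_co K1 K2 n (F1 : 'M[R]_(m, K1)) (Q1 : 'M[R]_(K1, n))
    (F2 : 'M[R]_(m, K2)) (Q2 : 'M[R]_(K2, n)) :
  model_equiv F1 Q1 F2 Q2 -> forall x, in_co F1 x <-> in_co F2 x.
Proof.
case=> eqK; subst K2; case=> pi [[pi' piK pi'K] [eqF _]] x.
have eqF' s k : F1 s k = F2 s (pi' k) by rewrite eqF pi'K.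
split; first exact: in_co_relabel (can_inj piK) eqF.
exact: in_co_relabel (can_inj pi'K) eqF'.
Qed.

Lemma affine_indep_vertex KA KB (A : 'M[R]_(m, KA)) (B : 'M[R]_(m, KB)) l :
  affine_indep B -> (forall j, in_co B (col j A)) -> in_co A (col l B) ->
  exists j, col j A = col l B.
Proof.
move=> indepB /fin_all_exists[mu co_mu] [lam [lam_ge0 [lam_sum1 colB]]].
have mu_ge0 j k : 0 <= mu j k by case: (co_mu j) => ->.
have mu_sum1 j : \sum_k mu j k = 1 by case: (co_mu j) => _ [].
have colA j : col j A = \sum_k mu j k *: col k B by case: (co_mu j) => _ [].
(* [nu] gives barycentric coordinates of [col l B], so it is the indicator of
   [l]; hence every [mu j] with [lam j > 0] is supported on [l]. *)
pose nu k := \sum_j lam j * mu j k.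
have nu_delta : nu =1 fun k => (k == l)%:R.
  apply: affine_coord_inj indepB _ _.
    rewrite sumr_delta exchange_big /= -lam_sum1; apply: eq_bigr => j _.
    by rewrite -mulr_sumr mu_sum1 mulr1.
  rewrite sum_scale_delta colB; under eq_bigr do rewrite scaler_suml.
  rewrite exchange_big /=; apply: eq_bigr => j _.
  by rewrite colA scaler_sumr; apply: eq_bigr => k _; rewrite scalerA.
have [j /= lam_j_gt0] : exists j, true && (0 < lam j).
  by apply: (psumr_neq0P (fun j _ => lam_ge0 j)); rewrite lam_sum1; apply/eqP/oner_neq0.
have mu_j0 k : k != l -> mu j k = 0.
  move=> k_neq_l; have := nu_delta k; rewrite (negbTE k_neq_l) => nu_k0.
  have lam_mu_ge0 j' : true -> 0 <= lam j' * mu j' k by rewrite mulr_ge0.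
  have /eqP := psumr_eq0P lam_mu_ge0 nu_k0 (i := j) isT.
  by rewrite mulf_eq0 gt_eqF // => /eqP.
exists j; rewrite colA (bigD1 l) //= big1 ?addr0 => [|k /mu_j0 ->]; last first.
  by rewrite scale0r.
suff -> : mu j l = 1 by rewrite scale1r.
by rewrite -(mu_sum1 j) (bigD1 l) //= big1 ?addr0 // => k /mu_j0.
Qed.

Lemma in_co_eq_col_map KA KB (A : 'M[R]_(m, KA)) (B : 'M[R]_(m, KB)) :
  affine_indep B -> (forall x, in_co A x <-> in_co B x) ->
  exists f : 'I_KB -> 'I_KA, injective f /\ forall l, col (f l) A = col l B.
Proof.
move=> indepB coAB.
have /fin_all_exists[f colf] l : exists j, col j A = col l B.
  by apply: affine_indep_vertex indepB _ _ => [j|]; apply/coAB; exact: in_co_col.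
exists f; split=> // l l' eq_f.
by apply: (affine_indep_col_inj indepB); rewrite /= -!colf eq_f.
Qed.

Lemma relabel_model_equiv K n (F1 F2 : 'M[R]_(m, K)) (Q1 Q2 : 'M[R]_(K, n))
    (f : 'I_K -> 'I_K) :
  affine_indep F1 -> injective f -> (forall l, col (f l) F1 = col l F2) ->
  (forall i, \sum_k Q1 k i = 1) -> (forall i, \sum_k Q2 k i = 1) ->
  F1 *m Q1 = F2 *m Q2 -> model_equiv F1 Q1 F2 Q2.
Proof.
move=> indepF1 f_inj colf Q1_sum1 Q2_sum1 eqFQ.
have [g fK gK] := injF_bij f_inj; have g_inj := can_inj gK.
split=> //; exists f; split; first exact: injF_bij.
split=> [s k | k i]; first by move/colP/(_ s): (colf k); rewrite !mxE.
have coordE : (fun j => Q1 j i) =1 (fun j => Q2 (g j) i).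
  apply: affine_coord_inj indepF1 _ _.
    by rewrite Q1_sum1 -(Q2_sum1 i) [LHS](reindex_inj g_inj).
  rewrite -col_mulmx eqFQ col_mulmx (reindex_inj g_inj) /=.
  by apply: eq_bigr => j _; rewrite -colf gK.
by rewrite coordE fK.
Qed.

Lemma co_eq_model_equiv K1 K2 n (F1 : 'M[R]_(m, K1)) (Q1 : 'M[R]_(K1, n))
    (F2 : 'M[R]_(m, K2)) (Q2 : 'M[R]_(K2, n)) :
  affine_indep F1 -> affine_indep F2 -> inQK Q1 -> inQK Q2 ->
  (forall x, in_co F1 x <-> in_co F2 x) -> F1 *m Q1 = F2 *m Q2 ->
  model_equiv F1 Q1 F2 Q2.
Proof.
move=> indepF1 indepF2 [_ Q1_sum1] [_ Q2_sum1] coE eqFQ.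
have [f [f_inj colf]] := in_co_eq_col_map indepF2 coE.
have [g [g_inj _]] := in_co_eq_col_map indepF1 (fun x => iff_sym (coE x)).
have eqK : K1 = K2.
  have := leq_card _ g_inj; have := leq_card _ f_inj; rewrite !card_ord => le21 le12.
  by apply/eqP; rewrite eqn_leq le12 le21.
by subst K2; exact: relabel_model_equiv indepF1 f_inj colf Q1_sum1 Q2_sum1 eqFQ.
Qed.

Definition anchor_mx K n (w : 'I_K -> R) : 'M[R]_(K, n) :=
  \matrix_(k, i) if (i < K)%N then ((k : nat) == i)%:R else w k.

Lemma anchor_mx_an K n (w : 'I_K -> R) :
  (K <= n)%N -> (forall k, 0 <= w k) -> \sum_k w k = 1 -> inQan (anchor_mx n w).
Proof.
move=> K_le_n w_ge0 w_sum1; split; first split.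
- move=> k i; rewrite mxE; case: ifP => _; first by case: eqP; rewrite ?ler01 ?lexx.
  by rewrite w_ge0 -w_sum1 (bigD1 k) //= lerDl sumr_ge0.
- move=> i; under eq_bigr do rewrite mxE.
  have [i_lt_K | _] := ltnP i K; last exact: w_sum1.
  by rewrite -[RHS](sumr_delta _ (Ordinal i_lt_K)); apply: eq_bigr.
- move=> k; exists (widen_ord K_le_n k); apply/colP => j.
  by rewrite !mxE /= ltn_ord eqxx andbT.
Qed.

Lemma mulmx_anchor_eq K n (F : 'M[R]_(m, K)) (u v : 'I_K -> R) :
  \sum_k u k *: col k F = \sum_k v k *: col k F ->
  F *m anchor_mx n u = F *m anchor_mx n v.
Proof.
move=> eq_comb; apply: trmx_inj; apply/row_matrixP => i; rewrite -!tr_col !col_mulmx.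
under eq_bigr do rewrite mxE; under [in RHS]eq_bigr do rewrite mxE.
by have [/= _ | /= _] := ltnP i K; rewrite ?eq_comb.
Qed.

Lemma uniform_perturbation K (d : 'I_K -> R) :
  (0 < K)%N -> \sum_k d k = 0 ->
  exists2 t : R, t != 0 &
    (forall k, 0 <= K%:R^-1 + t * d k) /\ \sum_k (K%:R^-1 + t * d k) = 1.
Proof.
move=> K_gt0 d_sum0; pose S := \sum_k `|d k|.
have S1_gt0 : 0 < 1 + S by rewrite ltr_pwDl ?sumr_ge0.
exists (K%:R * (1 + S))^-1.
  by rewrite invr_eq0 mulf_neq0 // lt0r_neq0 // ltr0n.
have invKE : K%:R^-1 = (K%:R * (1 + S))^-1 * (1 + S).
  by rewrite invfM -mulrA mulVf ?mulr1 // lt0r_neq0.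
split=> [k|]; last first.
  by rewrite big_split /= -mulr_sumr d_sum0 mulr0 addr0 sum_uniform.
rewrite invKE -mulrDr mulr_ge0 ?invr_ge0 ?mulr_ge0 ?ler0n ?(ltW S1_gt0) //.
rewrite -addrA addr_ge0 // -lerBlDr sub0r (le_trans (ler_norm _)) // normrN.
by rewrite /S (bigD1 k) //= lerDl sumr_ge0.
Qed.

Lemma identifiable_affine_indep n (mdl : forall K, 'M[R]_(m, K) -> 'M[R]_(K, n) -> Prop)
    K (F : 'M[R]_(m, K)) :
  identifiable mdl -> (forall Q : 'M[R]_(K, n), inQan Q -> mdl K F Q) ->
  (0 < K)%N -> (K < n)%N -> affine_indep F.
Proof.
move=> idf mdl_an K_gt0 K_lt_n d d_sum0 d_comb0 k.
have [t t_neq0 [v_ge0 v_sum1]] := uniform_perturbation K_gt0 d_sum0.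
have u_ge0 (j : 'I_K) : 0 <= K%:R^-1 :> R by rewrite invr_ge0.
have eqFQ : F *m anchor_mx n (fun=> K%:R^-1) =
            F *m anchor_mx n (fun k => K%:R^-1 + t * d k).
  apply: mulmx_anchor_eq; under [RHS]eq_bigr do rewrite scalerDl -scalerA.
  by rewrite big_split /= -!scaler_sumr d_comb0 scaler0 addr0.
have [_ [pi [_ [_ eqQ]]]] := idf _ _ _ _ _ _
  (mdl_an _ (anchor_mx_an (ltnW K_lt_n) u_ge0 (sum_uniform _ K_gt0)))
  (mdl_an _ (anchor_mx_an (ltnW K_lt_n) v_ge0 v_sum1)) eqFQ.
move: (eqQ k (Ordinal K_lt_n)); rewrite !mxE /= ltnn.
move=> /(canRL (addKr _)); rewrite addNr => /eqP.
by rewrite mulf_eq0 (negbTE t_neq0) => /eqP.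
Qed.

End Simplex.

Theorem mainTheorem5 (R : realType) (m n : nat)
  (mdl : forall K : nat, 'M[R]_(m, K) -> 'M[R]_(K, n) -> Prop) :
  (0 < m)%N -> (0 < n)%N ->
  (* M is a subset of the union over K >= 1 of F_K x Q_K *)
  (forall K F Q, mdl K F Q -> (0 < K)%N /\ inFK F /\ inQK Q) ->
  (* (1) K(F) < N *)
  (forall K F Q, mdl K F Q -> (K < n)%N) ->
  (* (2) {F} x Q_K^an is contained in M *)
  (forall K F Q, mdl K F Q -> forall Q' : 'M[R]_(K, n), inQan Q' -> mdl K F Q') ->
  identifiable mdl <->
  ((forall K1 (F1 : 'M[R]_(m, K1)) Q1 K2 (F2 : 'M[R]_(m, K2)) Q2,
       mdl K1 F1 Q1 -> mdl K2 F2 Q2 -> F1 *m Q1 = F2 *m Q2 ->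
       forall x : 'cV[R]_m, in_co F1 x <-> in_co F2 x) /\
   (forall K (F : 'M[R]_(m, K)) Q, mdl K F Q -> diffs_indep F)).
Proof.
move=> _ _ mdl_dom mdl_lt mdl_an.
have mdl_affine K F Q : mdl K F Q -> diffs_indep F <-> affine_indep F.
  by case/mdl_dom => K_gt0 _; exact: diffs_indep_affine.
split=> [idf | [coE diffs] K1 F1 Q1 K2 F2 Q2 h1 h2 eqFQ].
  split=> [K1 F1 Q1 K2 F2 Q2 h1 h2 eqFQ | K F Q h].
    exact: model_equiv_in_co (idf _ _ _ _ _ _ h1 h2 eqFQ).
  apply/(mdl_affine _ _ _ h); have [K_gt0 _] := mdl_dom _ _ _ h.
  exact: identifiable_affine_indep idf (mdl_an _ _ _ h) K_gt0 (mdl_lt _ _ _ h).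
have [_ [_ Q1_st]] := mdl_dom _ _ _ h1; have [_ [_ Q2_st]] := mdl_dom _ _ _ h2.
apply: co_eq_model_equiv Q1_st Q2_st (coE _ _ _ _ _ _ h1 h2 eqFQ) eqFQ.
  by apply/(mdl_affine _ _ _ h1)/(diffs _ _ _ h1).
by apply/(mdl_affine _ _ _ h2)/(diffs _ _ _ h2).
Qed.
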